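(* Let $N\ge1$, $K\ge1$, $n_v\ge0$, and assume the row-stochastic matrix $\mathbf{T}\in[0,1]^{K\times K}$ is irreducible and aperiodic. Let $X(\cdot)$ be the probabilistic cellular automaton on $[K]^N$ with local transition matrix $\mathbf{T}$ and global transition matrix $\mathbf{P}$. Then $X(\cdot)$ is irreducible, aperiodic, and hence ergodic. In particular, there exists a unique stationary distribution $\pi$ on $[K]^N$, all states are positive recurrent, $\lim_{t\to\infty}\mathbb{P}(X(t)=\cdot)=\pi(\cdot)$, and there exist $C\in(0,\infty)$, $\rho\in(0,1)$ and $t_0\in\mathbb{N}$ such that $\|\mathbf{P}^t(x,\cdot)-\pi\|_{TV}\le C\rho^t$ for all $t\ge t_0$ and all $x\in[K]^N$, where $\|\cdot\|_{TV}:=\|\cdot\|_1$.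
   Context: Vertices $[N]=\{1,\dots,N\}$ are arranged on a cycle; for $n\in[N]$, $V_n\subset[N]$ is the set of residues modulo $N$ of $n-n_v,\dots,n+n_v$, and $|V_n|$ its cardinality. The probabilistic cellular automaton is the Markov chain $X(t)=(X_1(t),\dots,X_N(t))$ on $[K]^N$ with transition matrix $\mathbf{P}(x,y)=\prod_{n=1}^N \frac{1}{|V_n|}\sum_{i\in V_n}\mathbf{T}_{x_i,y_n}$. Here $\|\mu\|_1=\sum_{y}|\mu(y)|$. *)

From HB Require Import structures.
From mathcomp Require Import all_boot all_order all_algebra.
From mathcomp Require Import all_classical all_reals all_analysis.
Set Implicit Arguments. Unset Strict Implicit. Unset Printing Implicit Defensive.
Import Order.TTheory GRing.Theory Num.Theory.
Import numFieldNormedType.Exports.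
Local Open Scope classical_set_scope.
Local Open Scope ring_scope.

Section Kernels.
Variables (R : realType) (S : finType).

Definition kid : S -> S -> R := fun x y => (x == y)%:R.
Definition kmul (A B : S -> S -> R) : S -> S -> R :=
  fun x z => \sum_(y : S) A x y * B y z.
Definition kpow (P : S -> S -> R) (t : nat) : S -> S -> R :=
  iter t (fun M => kmul M P) kid.

Definition row_stochastic (P : S -> S -> R) : Prop :=
  (forall x y, 0 <= P x y) /\ (forall x, \sum_(y : S) P x y = 1).

Definition irreducible (P : S -> S -> R) : Prop :=
  forall x y, exists t : nat, 0 < kpow P t x y.

(* period of x equal to 1: the gcd of {t >= 1 : P^t(x,x) > 0} is 1,
   i.e. the only common divisor of that set is 1. *)
Definition aperiodic_state (P : S -> S -> R) (x : S) : Prop :=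
  forall d : nat, (forall t : nat, (0 < t)%N -> 0 < kpow P t x x -> (d %| t)%N) ->
  d = 1%N.
Definition aperiodic (P : S -> S -> R) : Prop := forall x, aperiodic_state P x.

(* P_x(tau_x^+ = t), t >= 1, where tau_x^+ is the first return time to x:
   sum over paths x -> y1 -> ... -> y_{t-1} -> x with all y_i <> x. *)
Definition taboo (P : S -> S -> R) (x : S) : S -> S -> R :=
  fun y z => if z == x then 0 else P y z.
Definition first_return (P : S -> S -> R) (x : S) (t : nat) : R :=
  kmul (kpow (taboo P x) t.-1) P x x.

(* x is positive recurrent: return to x happens a.s. and E_x[tau_x^+] < oo *)
Definition positive_recurrent (P : S -> S -> R) (x : S) : Prop :=
  ((fun n : nat => \sum_(1 <= t < n) first_return P x t) @ \oo --> (1 : R))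
  /\ cvg ((fun n : nat => \sum_(1 <= t < n) t%:R * first_return P x t) @ \oo).

Definition prob_dist (mu : S -> R) : Prop :=
  (forall x, 0 <= mu x) /\ \sum_(x : S) mu x = 1.

Definition stationary (P : S -> S -> R) (pi : S -> R) : Prop :=
  prob_dist pi /\ forall y, \sum_(x : S) pi x * P x y = pi y.

End Kernels.

(* Cyclic neighbourhood V_n (0-indexed vertices 'I_N):
   residues mod N of n - nv, ..., n + nv. Adding N*nv avoids truncated
   subtraction: (n + k + N*nv - nv) %% N = (n + k - nv) mod N for k < 2nv+1, N>=1. *)
Definition nbhd (N nv : nat) (n : 'I_N) : {set 'I_N} :=
  [set i : 'I_N | [exists k : 'I_(2 * nv + 1),
     (i : nat) == ((n + k + N * nv - nv) %% N)%N]].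

Definition pca_P (R : realType) (N K nv : nat) (T : 'M[R]_K)
  (x y : {ffun 'I_N -> 'I_K}) : R :=
  \prod_(n : 'I_N) ((#|nbhd nv n|%:R)^-1 * \sum_(i in nbhd nv n) T (x i) (y n)).

From HB Require Import structures.
From mathcomp Require Import all_boot all_order all_algebra.
From mathcomp Require Import all_classical all_reals all_analysis.
From mathcomp Require Import ring lra zify.
Import Order.TTheory GRing.Theory Num.Theory.
Import numFieldNormedType.Exports.
Set Implicit Arguments. Unset Strict Implicit. Unset Printing Implicit Defensive.

(* Every vertex of the automaton copies the state of a uniformly chosen
   neighbour, itself included, and then moves by T; so P dominates, up to a
   positive factor, the product kernel in which the vertices evolve
   independently by T.  Irreducibility and aperiodicity make T primitive
   (T^m > 0, through the numerical semigroup of return times at each state),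
   hence P^m > 0 entrywise.  A stochastic kernel with a positive power
   satisfies Doeblin's condition P^m >= delta > 0: every m steps it contracts
   the oscillation of each column of P^t by the factor 1 - delta, so P^t(x, .)
   converges geometrically to a limit pi, which is then the unique stationary
   law; likewise the probability of avoiding a given state for t steps decays
   geometrically, which gives positive recurrence. *)

Section NumericalSemigroup.
Variable A : nat -> Prop.
Hypothesis A_gt0 : forall t, A t -> 0 < t.
Hypothesis AD : forall s t, A s -> A t -> A (s + t).
Hypothesis A_gcd1 : forall d, (forall t, A t -> d %| t) -> d = 1.

Let A0 n := n = 0 \/ A n.

Lemma A0D s t : A0 s -> A0 t -> A0 (s + t).
Proof.
case=> [->|hs]; first by [].
case=> [->|ht]; first by rewrite addn0; right.
by right; apply: AD.
Qed.

Lemma A0M a n : A0 n -> A0 (a * n).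
Proof.
move=> hn; elim: a => [|a IH]; first by left.
by rewrite mulSn; apply: A0D.
Qed.

Let gap g := exists p, A0 p /\ A0 (p + g).

Lemma gap_descent g : 1 < g -> gap g -> exists2 g', 0 < g' < g & gap g'.
Proof.
move=> g_gt1 [p [hp hpg]].
have [t [At g_ndvd_t]] : exists t, A t /\ ~~ (g %| t).
  apply: contrapT => no_t; suff g_eq1 : g = 1 by rewrite g_eq1 in g_gt1.
  by apply: A_gcd1 => t At; apply/negPn/negP => g_ndvd_t; apply: no_t; exists t.
have t_gt0 := A_gt0 At.
have [a _ ha] := Bezoutl g t_gt0.
have [b hb] := dvdnP ha.
exists (gcdn t g).
  rewrite gcdn_gt0 t_gt0 /= ltn_neqAle dvdn_leq ?(ltnW g_gt1) ?dvdn_gcdr // andbT.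
  by apply: contraNneq g_ndvd_t => <-; rewrite dvdn_gcdl.
exists (a * (p + g)); split; first exact: A0M.
have -> : a * (p + g) + gcdn t g = b * t + a * p by rewrite -hb; nia.
by apply: A0D; apply: A0M => //; right.
Qed.

Lemma gap1 : gap 1.
Proof.
have [a Aa] : exists a, A a.
  apply: contrapT => noA; suff : 2 = 1 by [].
  by apply: A_gcd1 => t At; exfalso; apply: noA; exists t.
suff : forall g, 0 < g -> gap g -> gap 1.
  by apply; [exact: A_gt0 Aa | exists 0; split; [left | right]].
elim/ltn_ind => g IH g_gt0 hg.
case: (ltngtP g 1) => [|g_gt1|<-] //; first by lia.
have [g' /andP[g'_gt0 g'_lt] hg'] := gap_descent g_gt1 hg.
exact: IH g'_lt g'_gt0 hg'.
Qed.

Lemma semigroup_contains_large : exists L, forall n, L <= n -> A n.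
Proof.
have [p [hp hp1]] := gap1.
exists (p * p).+1 => n hn.
suff : A0 n by case=> // n0; rewrite n0 in hn.
case: (posnP p) => [p0|p_gt0].
  by move: hp1; rewrite p0 add0n => h1; rewrite -(muln1 n); apply: A0M.
have hq : p <= n %/ p by rewrite leq_divRL //; lia.
have hr : n %% p < p by rewrite ltn_mod.
(* n >= p^2 forces q >= r, so n = (q - r) p + r (p + 1) for q, r the quotient and
   remainder of n by p *)
rewrite (divn_eq n p).
have -> : n %/ p * p + n %% p = (n %/ p - n %% p) * p + n %% p * (p + 1).
  rewrite mulnDr muln1 mulnBl; nia.
by apply: A0D; apply: A0M.
Qed.

End NumericalSemigroup.

Local Open Scope classical_set_scope.
Local Open Scope ring_scope.

Section Kernels.
Variables (R : realType) (S : finType).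
Implicit Types (A B C P : S -> S -> R) (F : S -> R).

Lemma sum_kid_mul F a : \sum_b kid R a b * F b = F a.
Proof.
rewrite (bigD1 a) //= /kid eqxx mul1r big1 ?addr0 // => b /negPf.
by rewrite eq_sym => ->; rewrite mul0r.
Qed.

Lemma sum_kid (a : S) : \sum_b kid R a b = 1.
Proof.
by rewrite -[RHS](sum_kid_mul (fun=> 1) a); apply: eq_bigr => b _; rewrite mulr1.
Qed.

Lemma kid_ge0 (a b : S) : 0 <= kid R a b.
Proof. by rewrite /kid ler0n. Qed.

Lemma kmulA A B C : kmul (kmul A B) C = kmul A (kmul B C).
Proof.
apply/funext => x; apply/funext => z; rewrite /kmul.
under eq_bigr => y _ do rewrite big_distrl /=.
rewrite exchange_big /=; apply: eq_bigr => w _.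
by rewrite big_distrr /=; apply: eq_bigr => y _; rewrite mulrA.
Qed.

Lemma kmul1l A : kmul (@kid R S) A = A.
Proof. by apply/funext => x; apply/funext => z; apply: sum_kid_mul. Qed.

Lemma kmul1r A : kmul A (@kid R S) = A.
Proof.
apply/funext => x; apply/funext => z; rewrite /kmul /kid.
rewrite (bigD1 z) //= eqxx mulr1 big1 ?addr0 // => y /negPf ->.
by rewrite mulr0.
Qed.

Lemma kpowS P t : kpow P t.+1 = kmul (kpow P t) P.
Proof. by []. Qed.

Lemma kpow1 P : kpow P 1 = P.
Proof. by rewrite kpowS kmul1l. Qed.

Lemma kpowD P s t : kpow P (s + t) = kmul (kpow P s) (kpow P t).
Proof.
elim: t => [|t IH]; first by rewrite addn0 kmul1r.
by rewrite addnS !kpowS IH kmulA.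
Qed.

Lemma kpowSl P t : kpow P t.+1 = kmul P (kpow P t).
Proof. by rewrite -add1n kpowD kpow1. Qed.

Lemma kmul_ge0 A B : (forall x y, 0 <= A x y) -> (forall x y, 0 <= B x y) ->
  forall x y, 0 <= kmul A B x y.
Proof. by move=> A0 B0 x y; apply: sumr_ge0 => z _; apply: mulr_ge0. Qed.

Lemma kpow_ge0 P : (forall x y, 0 <= P x y) -> forall t x y, 0 <= kpow P t x y.
Proof.
move=> P0; elim=> [|t IH] x y; first exact: kid_ge0.
by rewrite kpowS; apply: kmul_ge0.
Qed.

Lemma kmul_rowsum_le A B c a : (forall x y, 0 <= A x y) ->
  (forall x y, 0 <= B x y) -> (forall x, \sum_y B x y <= c) ->
  \sum_y kmul A B a y <= c * \sum_x A a x.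
Proof.
move=> A0 B0 hB; rewrite /kmul exchange_big /= mulr_sumr.
apply: ler_sum => x _; rewrite -big_distrr /= [c * _]mulrC.
exact: ler_wpM2l.
Qed.

Lemma kmul_rowsum A B : (forall x, \sum_y B x y = 1) ->
  forall a, \sum_y kmul A B a y = \sum_y A a y.
Proof.
move=> B1 a; rewrite /kmul exchange_big /=; apply: eq_bigr => x _.
by rewrite -big_distrr /= B1 mulr1.
Qed.

Lemma kpow_rowsum P : (forall x, \sum_y P x y = 1) ->
  forall t x, \sum_y kpow P t x y = 1.
Proof.
move=> P1; elim=> [|t IH] x; first exact: sum_kid.
by rewrite kpowS kmul_rowsum.
Qed.

Lemma kpow_le1 P : row_stochastic P -> forall t x y, kpow P t x y <= 1.
Proof.
move=> [P0 P1] t x y; rewrite -(kpow_rowsum P1 t x) (bigD1 y) //= lerDl.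
by apply: sumr_ge0 => z _; apply: kpow_ge0.
Qed.

Lemma kpowD_ge P : (forall x y, 0 <= P x y) ->
  forall s t a z b, kpow P s a z * kpow P t z b <= kpow P (s + t) a b.
Proof.
move=> P0 s t a z b; rewrite kpowD /kmul (bigD1 z) //= lerDl.
by apply: sumr_ge0 => w _; apply: mulr_ge0; apply: kpow_ge0.
Qed.

Lemma kpow_gt0_shift P m : row_stochastic P ->
  (forall x y, 0 < kpow P m x y) -> forall t x y, 0 < kpow P (t + m) x y.
Proof.
move=> [P0 P1] Pm_gt0 t x y.
have [z /andP[_ Pt_gt0]] : exists z, xpredT z && (0 < kpow P t x z).
  apply: (psumr_neq0P (P := xpredT)) => [z _|]; first exact: kpow_ge0.
  by rewrite (kpow_rowsum P1) => /eqP; rewrite oner_eq0.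
exact: lt_le_trans (mulr_gt0 Pt_gt0 (Pm_gt0 z y)) (kpowD_ge P0 _ _ _ _ _).
Qed.

Lemma kpow_scale_le A B c : 0 <= c ->
  (forall x y, 0 <= A x y) -> (forall x y, c * A x y <= B x y) ->
  forall t x y, c ^+ t * kpow A t x y <= kpow B t x y.
Proof.
move=> c0 A0 cAB; elim=> [|t IH] x y; first by rewrite expr0 mul1r.
rewrite !kpowS /kmul exprSr mulr_sumr; apply: ler_sum => z _.
have -> : c ^+ t * c * (kpow A t x z * A z y) =
    (c ^+ t * kpow A t x z) * (c * A z y) by ring.
apply: ler_pM; [|exact: mulr_ge0|exact: IH|exact: cAB].
by apply: mulr_ge0; [exact: exprn_ge0 | exact: kpow_ge0].
Qed.

Lemma stationary_kpow P mu : stationary P mu ->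
  forall t y, \sum_x mu x * kpow P t x y = mu y.
Proof.
move=> [_ mu_inv]; elim=> [|t IH] y.
  rewrite /= -[RHS](sum_kid_mul mu y); apply: eq_bigr => x _.
  by rewrite mulrC /kid eq_sym.
rewrite kpowS /kmul -[RHS]mu_inv.
under eq_bigr do rewrite big_distrr.
rewrite exchange_big /=; apply: eq_bigr => z _.
by rewrite -IH big_distrl /=; apply: eq_bigr => x _; rewrite mulrA.
Qed.

End Kernels.

Section GeometricBounds.
Variable R : realType.

Lemma cvg_geometric_bound (u : nat -> R) (l C rho : R) : 0 <= rho < 1 ->
  (forall n, `|u n - l| <= C * rho ^+ n) -> u @ \oo --> l.
Proof.
move=> /andP[rho_ge0 rho_lt1] hu.
have geo0 : geometric C rho @ \oo --> 0 by apply: cvg_geometric; rewrite ger0_norm.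
apply: (@squeeze_cvgr _ _ _ _ (fun n => l - C * rho ^+ n) (fun n => l + C * rho ^+ n)).
- by apply: nearW => n; rewrite -ler_distl.
- by rewrite -[X in _ --> X]subr0; apply: cvgB; [exact: cvg_cst | exact: geo0].
- by rewrite -[X in _ --> X]addr0; apply: cvgD; [exact: cvg_cst | exact: geo0].
Qed.

Lemma le0_geometric_bound (q C rho : R) : 0 <= rho < 1 ->
  (forall n : nat, q <= C * rho ^+ n) -> q <= 0.
Proof.
move=> /andP[rho_ge0 rho_lt1] hq.
have geo0 : geometric C rho @ \oo --> 0 by apply: cvg_geometric; rewrite ger0_norm.
by apply: (ler_cvg_to (cvg_cst q) geo0); apply: nearW.
Qed.

Lemma eq0_geometric_bound (q C rho : R) : 0 <= rho < 1 ->
  (forall n : nat, `|q| <= C * rho ^+ n) -> q = 0.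
Proof.
by move=> hr hq; apply/eqP; rewrite -normr_le0; apply: le0_geometric_bound hr hq.
Qed.

Lemma bernoulli_ineq (b : R) (n : nat) : 0 <= b <= 1 -> 1 - n%:R * b <= (1 - b) ^+ n.
Proof.
move=> /andP[b_ge0 b_le1]; elim: n => [|n IH]; first by rewrite mul0r subr0 expr0.
rewrite exprSr; apply: le_trans (_ : (1 - n%:R * b) * (1 - b) <= _).
  have : 0 <= n%:R :> R by rewrite ler0n.
  rewrite -natr1; nra.
by apply: ler_wpM2r; lra.
Qed.

Lemma expr_divn_geometric (r : R) (m : nat) : 0 <= r < 1 -> (0 < m)%N ->
  exists C rho : R, 0 < C /\ 0 < rho < 1 /\
    forall t : nat, r ^+ (t %/ m) <= C * rho ^+ t.
Proof.
move=> /andP[r_ge0 r_lt1] m_gt0.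
have m_ge1 : 1 <= m%:R :> R by rewrite ler1n.
(* Bernoulli: (1 - b)^m >= 1 - m b = r + b, for the b with (m + 1) b = 1 - r *)
pose b := (1 - r) / (m%:R + 1).
have b_eq : m%:R * b + b = 1 - r by rewrite /b; field; rewrite gt_eqF //; lra.
have b_gt0 : 0 < b by rewrite divr_gt0 //; lra.
pose rho := 1 - b.
have mb_gt0 : 0 < m%:R * b by rewrite mulr_gt0 // ltr0n.
have rho_gt0 : 0 < rho by rewrite /rho; lra.
have rho_lt1 : rho < 1 by rewrite /rho; lra.
have r_le : r <= rho ^+ m.
  apply: le_trans (bernoulli_ineq m _); first lra.
  by apply/andP; split; lra.
exists (rho ^+ m)^-1, rho; split; first by rewrite invr_gt0 exprn_gt0.
split; first by rewrite rho_gt0 rho_lt1.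
move=> t; rewrite {2}(divn_eq t m) exprD mulrA.
apply: le_trans (_ : rho ^+ (t %/ m * m) <= _).
  rewrite mulnC exprM; apply: lerXn2r; rewrite ?nnegrE //.
  exact: exprn_ge0 (ltW rho_gt0).
rewrite mulrAC mulrC ler_peMr ?exprn_ge0 ?(ltW rho_gt0) //.
rewrite mulrC ler_pdivlMr ?exprn_gt0 // mul1r.
by apply: ler_wiXn2l; rewrite ?ltW // ltnW // ltn_mod.
Qed.

End GeometricBounds.

Section WeightedSums.
Variables (R : realType) (S : finType).

Lemma weighted_diff_le (g h f : S -> R) (e : R) :
  (forall y, 0 <= g y) -> (forall y, 0 <= h y) ->
  \sum_y g y = \sum_y h y -> (forall y z, f y - f z <= e) ->
  \sum_y g y * f y - \sum_y h y * f y <= (\sum_y g y) * e.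
Proof.
move=> g0 h0 gh fe.
have sg_ge0 : 0 <= \sum_y g y by apply: sumr_ge0.
have [sg0 | sg_neq0] := eqVneq (\sum_y g y) 0.
  have g_eq0 := psumr_eq0P (fun i _ => g0 i) sg0.
  have h_eq0 := psumr_eq0P (fun i _ => h0 i) (etrans (esym gh) sg0).
  by rewrite sg0 mul0r !big1 ?subrr // => y _; rewrite ?g_eq0 ?h_eq0 // mul0r.
have sg_gt0 : 0 < \sum_y g y by rewrite lt_def sg_neq0.
(* multiply by the total mass and compare the double sums over pairs (y, z) *)
rewrite -(ler_pM2l sg_gt0).
have -> : (\sum_y g y) * (\sum_y g y * f y - \sum_y h y * f y) =
    \sum_y \sum_z g y * h z * (f y - f z).
  transitivity (\sum_y \sum_z g y * h z * f y - \sum_y \sum_z g y * h z * f z).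
    rewrite mulrBr; congr (_ - _).
      rewrite {1}gh mulrC big_distrl /=; apply: eq_bigr => y _.
      by rewrite big_distrr /=; apply: eq_bigr => z _; ring.
    rewrite big_distrl /=; apply: eq_bigr => y _.
    by rewrite big_distrr /=; apply: eq_bigr => z _; ring.
  rewrite -sumrB; apply: eq_bigr => y _; rewrite -sumrB; apply: eq_bigr => z _.
  by ring.
have -> : (\sum_y g y) * ((\sum_y g y) * e) = \sum_y \sum_z g y * h z * e.
  rewrite {2}gh big_distrl /=; apply: eq_bigr => y _.
  by rewrite big_distrl big_distrr /=; apply: eq_bigr => z _; ring.
apply: ler_sum => y _; apply: ler_sum => z _.
by apply: ler_wpM2l; [apply: mulr_ge0 | apply: fe].
Qed.

Lemma convex_norm_le (w F : S -> R) (e : R) : (forall x, 0 <= w x) ->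
  \sum_x w x = 1 -> (forall x, `|F x| <= e) -> `|\sum_x w x * F x| <= e.
Proof.
move=> w0 w1 hF; apply: le_trans (ler_norm_sum _ _ _) _.
rewrite -[e]mul1r -w1 big_distrl /=; apply: ler_sum => x _.
by rewrite normrM ger0_norm //; apply: ler_wpM2l.
Qed.

End WeightedSums.

Definition geometrically_ergodic (R : realType) (S : finType) (P : S -> S -> R) : Prop :=
  exists pi : S -> R,
    stationary P pi /\
    (forall pi', stationary P pi' -> pi' = pi) /\
    (forall mu0, prob_dist mu0 -> forall y,
       (fun t : nat => \sum_x mu0 x * kpow P t x y) @ \oo --> pi y) /\
    exists (C rho : R) (t0 : nat),
      0 < C /\ 0 < rho < 1 /\
      forall (t : nat) (x : S), (t0 <= t)%N ->
        \sum_y `|kpow P t x y - pi y| <= C * rho ^+ t.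

Section GeometricErgodicity.
Variables (R : realType) (S : finType) (P : S -> S -> R) (pi : S -> R).
Variables (z0 : S) (D rho : R).
Hypotheses (HP : row_stochastic P) (rho_ge0 : 0 <= rho) (rho_lt1 : rho < 1).
Hypothesis kpow_dist : forall t x y, `|kpow P t x y - pi y| <= D * rho ^+ t.

Let P0 := proj1 HP.
Let P1 := proj2 HP.
Let rho_ge0lt1 : 0 <= rho < 1. Proof. by rewrite rho_ge0 rho_lt1. Qed.

Let D_ge0 : 0 <= D.
Proof. by have := kpow_dist 0 z0 z0; rewrite expr0 mulr1; apply: le_trans. Qed.

Lemma kpow_limit_ge0 y : 0 <= pi y.
Proof.
rewrite -oppr_le0; apply: (le0_geometric_bound (C := D) rho_ge0lt1) => n.
have := kpow_dist n z0 y; rewrite ler_distl => /andP[_ hle].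
have := kpow_ge0 P0 n z0 y; lra.
Qed.

Lemma kpow_tv_le t x : \sum_y `|kpow P t x y - pi y| <= D *+ #|S| * rho ^+ t.
Proof. by rewrite mulrnAl -sumr_const; apply: ler_sum => y _; apply: kpow_dist. Qed.

Lemma kpow_limit_sum1 : \sum_y pi y = 1.
Proof.
apply/eqP; rewrite -subr_eq0; apply/eqP.
apply: (eq0_geometric_bound (C := D *+ #|S|) rho_ge0lt1) => n.
rewrite -(kpow_rowsum P1 n z0) -sumrB; apply: le_trans (ler_norm_sum _ _ _) _.
by rewrite (eq_bigr _ (fun y _ => distrC _ _)); apply: kpow_tv_le.
Qed.

Lemma kpow_limit_invariant y : \sum_x pi x * P x y = pi y.
Proof.
apply/eqP; rewrite -subr_eq0; apply/eqP.
apply: (eq0_geometric_bound (C := D *+ #|S| + D) rho_ge0lt1) => n.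
have -> : \sum_x pi x * P x y - pi y =
    \sum_x (pi x - kpow P n z0 x) * P x y + (kpow P n.+1 z0 y - pi y).
  rewrite kpowS /kmul.
  have -> : \sum_x (pi x - kpow P n z0 x) * P x y =
      \sum_x pi x * P x y - \sum_x kpow P n z0 x * P x y.
    by rewrite -sumrB; apply: eq_bigr => x _; rewrite mulrBl.
  ring.
rewrite mulrDl; apply: le_trans (ler_normD _ _) _; apply: lerD; last first.
  apply: le_trans (kpow_dist _ _ _) _; rewrite exprSr; apply: (ler_wpM2l D_ge0).
  exact: ler_piMr (exprn_ge0 _ rho_ge0) (ltW rho_lt1).
apply: le_trans (ler_norm_sum _ _ _) _; apply: le_trans (kpow_tv_le n z0).
apply: ler_sum => x _; rewrite normrM (ger0_norm (P0 _ _)) distrC.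
by apply: ler_piMr => //; have := kpow_le1 HP 1 x y; rewrite kpow1.
Qed.

Lemma kpow_limit_stationary : stationary P pi.
Proof.
by split; [split; [exact: kpow_limit_ge0 | exact: kpow_limit_sum1] |
           exact: kpow_limit_invariant].
Qed.

Lemma stationary_unique mu : stationary P mu -> mu = pi.
Proof.
move=> mu_st; have [[mu0 mu1] _] := mu_st.
apply/funext => y; apply/eqP; rewrite -subr_eq0; apply/eqP.
apply: (eq0_geometric_bound (C := D) rho_ge0lt1) => n.
have -> : mu y - pi y = \sum_x mu x * (kpow P n x y - pi y).
  under eq_bigr do rewrite mulrBr.
  by rewrite sumrB (stationary_kpow mu_st) -big_distrl /= mu1 mul1r.
by apply: convex_norm_le => // x; apply: kpow_dist.
Qed.

Lemma cvg_mix_kpow mu0 : prob_dist mu0 -> forall y,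
  (fun t : nat => \sum_x mu0 x * kpow P t x y) @ \oo --> pi y.
Proof.
move=> [mu0_ge0 mu0_sum1] y; apply: (cvg_geometric_bound (C := D) rho_ge0lt1) => n.
have -> : \sum_x mu0 x * kpow P n x y - pi y = \sum_x mu0 x * (kpow P n x y - pi y).
  under [RHS]eq_bigr do rewrite mulrBr.
  by rewrite sumrB -big_distrl /= mu0_sum1 mul1r.
by apply: convex_norm_le => // x; apply: kpow_dist.
Qed.

Lemma geometrically_ergodic_of_kpow_dist : 0 < D -> 0 < rho -> geometrically_ergodic P.
Proof.
move=> D_gt0 rho_gt0; exists pi; split; first exact: kpow_limit_stationary.
split; first exact: stationary_unique.
split; first exact: cvg_mix_kpow.
exists (D *+ #|S|), rho, 0%N; split.
  by rewrite pmulrn_lgt0 //; apply/card_gt0P; exists z0.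
by split; [rewrite rho_gt0 | move=> t x _; apply: kpow_tv_le].
Qed.

End GeometricErgodicity.

Section FirstReturn.
Variables (R : realType) (S : finType) (P : S -> S -> R) (x : S).
Hypothesis HP : row_stochastic P.

Let P0 := proj1 HP.
Let P1 := proj2 HP.

(* the probability, starting from a, of not visiting x at times 1, ..., t *)
Definition avoid_mass t a := \sum_b kpow (taboo P x) t a b.

Lemma taboo_ge0 a b : 0 <= taboo P x a b.
Proof. by rewrite /taboo; case: ifP. Qed.

Lemma kpow_taboo_le t a b : kpow (taboo P x) t a b <= kpow P t a b.
Proof.
elim: t a b => [|t IH] a b //; rewrite !kpowS /kmul.
apply: ler_sum => z _; apply: ler_pM; [|exact: taboo_ge0|exact: IH|].
  exact: kpow_ge0 taboo_ge0 _ _ _.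
by rewrite /taboo; case: ifP.
Qed.

Lemma kpow_taboo_x t a : kpow (taboo P x) t.+1 a x = 0.
Proof. by rewrite kpowS /kmul big1 // => z _; rewrite /taboo eqxx mulr0. Qed.

Lemma avoid_mass_ge0 t a : 0 <= avoid_mass t a.
Proof. by apply: sumr_ge0 => b _; apply: kpow_ge0 taboo_ge0 _ _ _. Qed.

Lemma avoid_mass_le1 t a : avoid_mass t a <= 1.
Proof. by rewrite -(kpow_rowsum P1 t a); apply: ler_sum => b _; apply: kpow_taboo_le. Qed.

Lemma first_return_ge0 t : 0 <= first_return P x t.
Proof. by apply: kmul_ge0; [exact: (kpow_ge0 taboo_ge0) | exact: P0]. Qed.

Lemma first_return_avoid_mass t :
  first_return P x t.+1 + avoid_mass t.+1 x = avoid_mass t x.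
Proof.
have -> : avoid_mass t x = \sum_y kmul (kpow (taboo P x) t) P x y.
  by rewrite kmul_rowsum.
rewrite [RHS](bigD1 x) //=; congr (_ + _).
rewrite /avoid_mass (bigD1 x) //= -kpowS kpow_taboo_x add0r; apply: eq_bigr => y y_neq_x.
by rewrite kpowS /kmul; apply: eq_bigr => z _; rewrite /taboo (negPf y_neq_x).
Qed.

Lemma sum_first_return n :
  \sum_(1 <= t < n.+1) first_return P x t = 1 - avoid_mass n x.
Proof.
elim: n => [|n IH]; first by rewrite big_geq // /avoid_mass sum_kid subrr.
by rewrite big_nat_recr //= IH -(first_return_avoid_mass n); ring.
Qed.

Lemma sum_mean_first_return n :
  \sum_(1 <= t < n.+1) t%:R * first_return P x t + n%:R * avoid_mass n x =
  \sum_(s < n) avoid_mass s x.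
Proof.
elim: n => [|n IH]; first by rewrite big_geq // big_ord0 mul0r addr0.
rewrite big_nat_recr //= big_ord_recr /= -IH -(first_return_avoid_mass n) -natr1.
ring.
Qed.

Section GeometricAvoidance.
Variables C rho : R.
Hypotheses (C_ge0 : 0 <= C) (rho_gt0 : 0 < rho) (rho_lt1 : rho < 1).
Hypothesis avoid_mass_geometric : forall t, avoid_mass t x <= C * rho ^+ t.

Lemma cvg_sum_first_return :
  (fun n : nat => \sum_(1 <= t < n) first_return P x t) @ \oo --> (1 : R).
Proof.
rewrite -cvg_shiftS; apply: (cvg_geometric_bound (C := C) (rho := rho)) => [|n /=].
  by rewrite (ltW rho_gt0) rho_lt1.
by rewrite sum_first_return addrAC subrr add0r normrN ger0_norm ?avoid_mass_ge0.
Qed.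

Lemma cvg_mean_first_return :
  cvg ((fun n : nat => \sum_(1 <= t < n) t%:R * first_return P x t) @ \oo).
Proof.
have term_ge0 t : 0 <= t%:R * first_return P x t.
  by rewrite mulr_ge0 ?ler0n ?first_return_ge0.
apply: nondecreasing_is_cvgn.
  apply/nondecreasing_seqP => -[|n]; first by rewrite big_geq.
  by rewrite [leRHS]big_nat_recr //= lerDl.
exists (C / (1 - rho)) => _ [[|n] _ <-].
  by rewrite big_geq // divr_ge0 // subr_ge0 ltW.
have := sum_mean_first_return n.
have : 0 <= n%:R * avoid_mass n x by rewrite mulr_ge0 ?ler0n ?avoid_mass_ge0.
move=> h0 e; apply: le_trans (_ : \sum_(s < n) avoid_mass s x <= _); first lra.
apply: le_trans (geometric_le_lim n C_ge0 rho_gt0 _); last by rewrite gtr0_norm.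
by rewrite /series /= big_mkord; apply: ler_sum => s _; apply: avoid_mass_geometric.
Qed.

Lemma positive_recurrent_of_avoid_geometric : positive_recurrent P x.
Proof. by split; [exact: cvg_sum_first_return | exact: cvg_mean_first_return]. Qed.

End GeometricAvoidance.
End FirstReturn.

Section Doeblin.
Variables (R : realType) (S : finType) (P : S -> S -> R) (m : nat) (z0 : S).
Hypotheses (HP : row_stochastic P) (m_gt0 : (0 < m)%N).
Hypothesis Pm_gt0 : forall a b, 0 < kpow P m a b.

Let P0 := proj1 HP.
Let P1 := proj2 HP.

(* entries of P^m lie in (0, 1], so their product bounds each of them from below *)
Definition doeblin_coef := \prod_(p : S * S) kpow P m p.1 p.2.
Definition doeblin_rate := 1 - doeblin_coef.
Definition doeblin_decay t := doeblin_rate ^+ (t %/ m).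

Lemma doeblin_coef_gt0 : 0 < doeblin_coef.
Proof. by apply: prodr_gt0 => p _; apply: Pm_gt0. Qed.

Lemma doeblin_coef_le a b : doeblin_coef <= kpow P m a b.
Proof.
rewrite /doeblin_coef (bigD1 (a, b)) //=; apply: ler_piMr; first exact: ltW.
apply: prodr_ile1 => p _; rewrite (ltW (Pm_gt0 _ _)); exact: kpow_le1.
Qed.

Lemma doeblin_rate_ge0 : 0 <= doeblin_rate.
Proof. by rewrite subr_ge0 (le_trans (doeblin_coef_le z0 z0)) ?kpow_le1. Qed.

Lemma doeblin_rate_lt1 : doeblin_rate < 1.
Proof. by rewrite ltrBlDr ltrDl doeblin_coef_gt0. Qed.

Lemma doeblin_decay_ge0 t : 0 <= doeblin_decay t.
Proof. exact/exprn_ge0/doeblin_rate_ge0. Qed.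

Definition osc_le (F : S -> R) e := forall z w, F z - F w <= e.

Lemma osc_le_kpowS t y e :
  osc_le (kpow P t ^~ y) e -> osc_le (kpow P t.+1 ^~ y) e.
Proof.
move=> osc_t z w; rewrite !kpowSl.
have := weighted_diff_le (P0 z) (P0 w) (etrans (P1 z) (esym (P1 w))) osc_t.
by rewrite P1 mul1r.
Qed.

(* Only the excess of P^m over its uniform lower bound can separate two rows. *)
Lemma osc_le_kpow_addm t y e :
  osc_le (kpow P t ^~ y) e -> osc_le (kpow P (m + t) ^~ y) (doeblin_rate * e).
Proof.
move=> osc_t z w; rewrite !kpowD /kmul.
have e_ge0 : 0 <= e by have := osc_t z z; rewrite subrr.
pose G a v := kpow P m a v - doeblin_coef.
have G_ge0 a v : 0 <= G a v by rewrite subr_ge0 doeblin_coef_le.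
have sumG a : \sum_v G a v = 1 - doeblin_coef *+ #|S|.
  by rewrite sumrB kpow_rowsum // sumr_const.
have sum_shift a : \sum_v kpow P m a v * kpow P t v y =
    \sum_v G a v * kpow P t v y + \sum_v doeblin_coef * kpow P t v y.
  by rewrite -big_split; apply: eq_bigr => v _; rewrite /G /= mulrBl subrK.
rewrite !sum_shift opprD addrACA subrr addr0.
apply: le_trans (weighted_diff_le (G_ge0 z) (G_ge0 w) _ osc_t) _; first by rewrite !sumG.
have card_gt0 : (0 < #|S|)%N by apply/card_gt0P; exists z0.
rewrite sumG; apply: (ler_wpM2r e_ge0); apply: lerB => //.
by rewrite -(prednK card_gt0) mulrS lerDl mulrn_wge0 // ltW // doeblin_coef_gt0.
Qed.

Lemma osc_le_kpow t y : osc_le (kpow P t ^~ y) (doeblin_decay t).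
Proof.
rewrite /doeblin_decay {1}(div.divn_eq t m); elim: (t %/ m)%N => [|k IH].
  rewrite mul0n add0n expr0; elim: (t %% m)%N => [|r]; last exact: osc_le_kpowS.
  move=> z w /=; rewrite /kid.
  by case: (z == y); case: (w == y); rewrite /= ?subrr ?subr0 ?sub0r ?lerN10.
by rewrite mulSn -addnA exprS; apply: osc_le_kpow_addm.
Qed.

Lemma kpow_shift_dist u t a b y :
  `|kpow P (u + t) a y - kpow P t b y| <= doeblin_decay t.
Proof.
have osc_t := osc_le_kpow t y.
have wu := kpow_ge0 P0 u a; have wb := kid_ge0 R b.
have same_mass : \sum_z kpow P u a z = \sum_z kid R b z by rewrite kpow_rowsum // sum_kid.
rewrite kpowD /kmul -[kpow P t b y](sum_kid_mul (kpow P t ^~ y)) ler_norml lerNl opprB.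
apply/andP; split.
  by have := weighted_diff_le wb wu (esym same_mass) osc_t; rewrite sum_kid mul1r.
by have := weighted_diff_le wu wb same_mass osc_t; rewrite kpow_rowsum // mul1r.
Qed.

Lemma kpow_lower_le_upper y s t a :
  kpow P s z0 y - doeblin_decay s <= kpow P t a y + doeblin_decay t.
Proof.
have := doeblin_decay_ge0 s; have := doeblin_decay_ge0 t.
case: (leqP t s) => [t_le_s | s_lt_t].
  by have := kpow_shift_dist (s - t) t z0 a y; rewrite subnK // ler_norml; lra.
have := kpow_shift_dist (t - s) s a z0 y; rewrite subnK ?(ltnW s_lt_t) // ler_norml; lra.
Qed.

Definition doeblin_limit y := sup (range (fun t => kpow P t z0 y - doeblin_decay t)).

Lemma kpow_dist_doeblin_limit t a y :
  `|kpow P t a y - doeblin_limit y| <= 2 * doeblin_decay t.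
Proof.
have lower_t : kpow P t z0 y - doeblin_decay t <= doeblin_limit y.
  apply: sup_upper_bound; last by exists t.
  split; first by exists (kpow P 0 z0 y - doeblin_decay 0), 0%N.
  by exists (kpow P 0 z0 y + doeblin_decay 0) => _ [s _ <-]; apply: kpow_lower_le_upper.
have upper_t : doeblin_limit y <= kpow P t a y + doeblin_decay t.
  apply: ge_sup; first by exists (kpow P 0 z0 y - doeblin_decay 0), 0%N.
  by move=> _ [s _ <-]; apply: kpow_lower_le_upper.
have := kpow_shift_dist 0 t a z0 y; have := doeblin_decay_ge0 t.
by rewrite add0n ler_norml ler_distl => *; apply/andP; split; lra.
Qed.

Lemma avoid_mass_m_le x a : avoid_mass P x m a <= doeblin_rate.
Proof.
rewrite /avoid_mass (bigD1 x) //= -(prednK m_gt0) kpow_taboo_x add0r prednK //.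
have := kpow_rowsum P1 m a; rewrite (bigD1 x) //= => sum1.
have : \sum_(y | y != x) kpow (taboo P x) m a y <= \sum_(y | y != x) kpow P m a y.
  by apply: ler_sum => y _; apply: kpow_taboo_le.
by have := doeblin_coef_le a x; rewrite /doeblin_rate; lra.
Qed.

Lemma avoid_mass_addm x t a :
  avoid_mass P x (t + m) a <= doeblin_rate * avoid_mass P x t a.
Proof.
rewrite /avoid_mass kpowD; apply: kmul_rowsum_le.
- exact: kpow_ge0 (taboo_ge0 x HP) t.
- exact: kpow_ge0 (taboo_ge0 x HP) m.
- exact: avoid_mass_m_le.
Qed.

Lemma avoid_mass_le_decay x t a : avoid_mass P x t a <= doeblin_decay t.
Proof.
rewrite /doeblin_decay {1}(div.divn_eq t m) addnC; elim: (t %/ m)%N => [|k IH].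
  by rewrite mul0n addn0 expr0 avoid_mass_le1.
rewrite mulSn addnCA addnC exprS; apply: le_trans (avoid_mass_addm _ _ _) _.
exact: (ler_wpM2l doeblin_rate_ge0).
Qed.

Lemma doeblin_irreducible : irreducible P.
Proof. by move=> a b; exists m. Qed.

Lemma doeblin_aperiodic : aperiodic P.
Proof.
move=> a d d_dvd.
have d_dvd_m := d_dvd m m_gt0 (Pm_gt0 a a).
have := d_dvd (1 + m)%N isT (kpow_gt0_shift HP Pm_gt0 1 a a).
by rewrite (dvdn_addl _ d_dvd_m) dvdn1 => /eqP.
Qed.

Theorem doeblin_ergodic : irreducible P /\ aperiodic P /\
  (forall x, positive_recurrent P x) /\ geometrically_ergodic P.
Proof.
have rate_ge0lt1 : 0 <= doeblin_rate < 1 by rewrite doeblin_rate_ge0 doeblin_rate_lt1.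
have [C [rho [C_gt0 [/andP[rho_gt0 rho_lt1] decay_le]]]] :=
  expr_divn_geometric rate_ge0lt1 m_gt0.
split; first exact: doeblin_irreducible.
split; first exact: doeblin_aperiodic.
split.
  move=> x; apply: (positive_recurrent_of_avoid_geometric HP (ltW C_gt0) rho_gt0 rho_lt1).
  by move=> t; apply: le_trans (avoid_mass_le_decay x t x) (decay_le t).
apply: (@geometrically_ergodic_of_kpow_dist _ _ _ doeblin_limit z0 (2 * C) rho HP);
  rewrite ?mulr_gt0 ?(ltW rho_gt0) //.
move=> t a y; apply: le_trans (kpow_dist_doeblin_limit t a y) _.
by rewrite -mulrA ler_pM2l // decay_le.
Qed.

End Doeblin.

Section Primitivity.
Variables (R : realType) (S : finType) (T : S -> S -> R).
Hypotheses (T_ge0 : forall i j, 0 <= T i j) (T_irr : irreducible T).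
Hypothesis T_aper : aperiodic T.

Lemma kpow_diag_gt0_eventually i : exists L, forall n, (L <= n)%N -> 0 < kpow T n i i.
Proof.
have [L HL] : exists L, forall n, (L <= n)%N -> (0 < n)%N /\ 0 < kpow T n i i.
  apply: semigroup_contains_large.
- by move=> t [].
- move=> s t [s_gt0 Ts_gt0] [t_gt0 Tt_gt0]; split; first by rewrite addn_gt0 s_gt0.
  exact: lt_le_trans (mulr_gt0 Ts_gt0 Tt_gt0) (kpowD_ge T_ge0 s t i i i).
- by move=> d d_dvd; apply: (@T_aper i) => t t_gt0 Tt_gt0; apply: d_dvd.
by exists L => n /HL [].
Qed.

Lemma irreducible_aperiodic_primitive :
  exists2 m, (0 < m)%N & forall i j, 0 < kpow T m i j.
Proof.
have [L HL] := boolp.choice kpow_diag_gt0_eventually.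
have [d Hd] := boolp.choice (fun p : S * S => T_irr p.1 p.2).
(* go from i back to i in M - d (i, j) >= L i steps, then from i to j in d (i, j) *)
exists (\max_i L i + \max_p d p).+1 => // i j.
set M := (_ + _).+1.
have d_le : (d (i, j) <= M)%N by have := leq_bigmax (F := d) (i, j); lia.
have L_le : (L i <= M - d (i, j))%N.
  by have := leq_bigmax (F := L) i; have := leq_bigmax (F := d) (i, j); lia.
rewrite -(subnK d_le).
exact: lt_le_trans (mulr_gt0 (HL i _ L_le) (Hd (i, j))) (kpowD_ge T_ge0 _ _ i i j).
Qed.

End Primitivity.

Section ProductKernel.
Variables (R : realType) (I J : finType).

Definition prod_kernel (T : J -> J -> R) (x y : {ffun I -> J}) : R :=
  \prod_i T (x i) (y i).

Lemma prod_kernel_kid : prod_kernel (@kid R J) = @kid R {ffun I -> J}.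
Proof.
apply/funext => x; apply/funext => y; rewrite /prod_kernel /kid.
have [<-|x_neq_y] := eqVneq x y; first by rewrite big1 // => i _; rewrite eqxx.
have [i x_neq_y_i] : exists i, x i != y i.
  apply/existsP; apply: contraNT x_neq_y => /existsPn same.
  by apply/eqP/ffunP => i; apply/eqP/negbNE/same.
by rewrite (bigD1 i) //= (negPf x_neq_y_i) mul0r.
Qed.

Lemma kpow_prod_kernel T t : kpow (prod_kernel T) t = prod_kernel (kpow T t).
Proof.
elim: t => [|t IH]; first by rewrite /= prod_kernel_kid.
apply/funext => x; apply/funext => z.
rewrite kpowS IH [in RHS]kpowS /kmul /prod_kernel bigA_distr_bigA /=.
by apply: eq_bigr => y _; rewrite big_split.
Qed.

End ProductKernel.

Section PCA.
Variables (R : realType) (N K nv : nat) (T : 'M[R]_K).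
Hypothesis HT : row_stochastic (fun i j : 'I_K => T i j).

Let T' := fun i j : 'I_K => T i j.
Let T0 : forall i j, 0 <= T i j := proj1 HT.
Let T1 : forall i, \sum_j T i j = 1 := proj2 HT.

Lemma mem_nbhd (n : 'I_N) : n \in nbhd nv n.
Proof.
rewrite inE; apply/existsP.
have nv_lt : (nv < 2 * nv + 1)%N by lia.
exists (Ordinal nv_lt) => /=.
have -> : (n + nv + N * nv - nv = nv * N + n)%N by lia.
by rewrite modnMDl modn_small.
Qed.

Lemma card_nbhd_gt0 (n : 'I_N) : 0 < #|nbhd nv n|%:R :> R.
Proof. by rewrite ltr0n; apply/card_gt0P; exists n; apply: mem_nbhd. Qed.

Lemma pca_P_row_stochastic : row_stochastic (@pca_P R N K nv T).
Proof.
split=> x.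
  move=> y; apply: prodr_ge0 => n _.
  apply: mulr_ge0; first by rewrite invr_ge0 ler0n.
  by apply: sumr_ge0 => i _; apply: T0.
rewrite /pca_P -(bigA_distr_bigA (fun n k =>
  (#|nbhd nv n|%:R)^-1 * \sum_(i in nbhd nv n) T (x i) k)) /=.
apply: big1 => n _; rewrite -big_distrr /= exchange_big /=.
under eq_bigr do rewrite T1.
by rewrite sumr_const mulVf // gt_eqF // card_nbhd_gt0.
Qed.

(* the probability that every vertex samples its own state *)
Definition pca_self_weight := \prod_(n : 'I_N) (#|nbhd nv n|%:R : R)^-1.

Lemma pca_self_weight_gt0 : 0 < pca_self_weight.
Proof. by apply: prodr_gt0 => n _; rewrite invr_gt0 card_nbhd_gt0. Qed.

Lemma pca_P_ge_prod_kernel x y :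
  pca_self_weight * prod_kernel T' x y <= @pca_P R N K nv T x y.
Proof.
rewrite /pca_self_weight /prod_kernel /pca_P -big_split /=; apply: ler_prod => n _.
apply/andP; split; first by apply: mulr_ge0; rewrite ?invr_ge0 ?ler0n.
apply: ler_wpM2l; first by rewrite invr_ge0 ler0n.
by rewrite (bigD1 n) ?mem_nbhd //= lerDl; apply: sumr_ge0.
Qed.

Lemma pca_kpow_gt0 m : (forall i j, 0 < kpow T' m i j) ->
  forall x y, 0 < kpow (@pca_P R N K nv T) m x y.
Proof.
move=> Tm_gt0 x y.
have prod_ge0 (a b : {ffun 'I_N -> 'I_K}) : 0 <= prod_kernel T' a b.
  by apply: prodr_ge0.
have := kpow_scale_le (ltW pca_self_weight_gt0) prod_ge0 pca_P_ge_prod_kernel m x y.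
apply: lt_le_trans; rewrite kpow_prod_kernel.
by apply: mulr_gt0; [exact/exprn_gt0/pca_self_weight_gt0 | exact: prodr_gt0].
Qed.

End PCA.

Unset Implicit Arguments.

Theorem theorem2p10 (R : realType) (N K nv : nat) (T : 'M[R]_K) :
  (1 <= N)%N -> (1 <= K)%N ->
  row_stochastic (fun i j : 'I_K => T i j) ->
  irreducible (fun i j : 'I_K => T i j) ->
  aperiodic (fun i j : 'I_K => T i j) ->
  let P := @pca_P R N K nv T in
  irreducible P /\ aperiodic P /\
  (forall x, positive_recurrent P x) /\
  exists pi : {ffun 'I_N -> 'I_K} -> R,
    stationary P pi /\
    (forall pi', stationary P pi' -> pi' = pi) /\
    (forall mu0, prob_dist mu0 -> forall y,
       (fun t : nat => \sum_(x : {ffun 'I_N -> 'I_K}) mu0 x * kpow P t x y)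
         @ \oo --> pi y) /\
    exists (C rho : R) (t0 : nat),
      0 < C /\ 0 < rho < 1 /\
      forall (t : nat) (x : {ffun 'I_N -> 'I_K}), (t0 <= t)%N ->
        \sum_(y : {ffun 'I_N -> 'I_K}) `|kpow P t x y - pi y| <= C * rho ^+ t.
Proof.
move=> _ K_gt0 HT T_irr T_aper P.
have [m m_gt0 Tm_gt0] := irreducible_aperiodic_primitive (proj1 HT) T_irr T_aper.
pose z0 : {ffun 'I_N -> 'I_K} := [ffun=> Ordinal K_gt0].
exact: doeblin_ergodic z0 (pca_P_row_stochastic N nv HT) m_gt0
  (pca_kpow_gt0 nv HT Tm_gt0).
Qed.
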